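(* Assume in addition that $\gcd(l,m)=1$ (so $k=lm$ and $\gcd(n,k)=1$). Then the unique numbers $u_r,v_r$ ($0\le r<k$) of the construction (i.e. those for which each $\mathcal A_r^t$ has slope $\alpha_{r+1}$ and each $\mathcal B_r^t$ has slope $-\beta_{r+1}$) are given by $$u_r=\frac{1}{\tau^n-1}\sum_{j=0}^{k-1}\Big(\alpha_{r+1+jn}\big(\psi_r^{jn+l}-\psi_r^{jn}\big)-\beta_{r+1+l+jn}\big(\psi_r^{(j+1)n}-\psi_r^{jn+l}\big)\Big),$$ $$v_r=\frac{1}{\tau^n-1}\sum_{j=0}^{k-1}\Big(\alpha_{r+1+m+jn}\big(\psi_r^{(j+1)n}-\psi_r^{jn+m}\big)-\beta_{r+1+jn}\big(\psi_r^{jn+m}-\psi_r^{jn}\big)\Big).$$ Equivalently, with $\chi_r=\psi_r^n$, $U_r=\alpha_{r+1}(\psi_r^l-1)-\beta_{r+l+1}(\psi_r^n-\psi_r^l)$ and $V_r=-\beta_{r+1}(\psi_r^m-1)+\alpha_{r+m+1}(\psi_r^n-\psi_r^m)$, they satisfy $u_r-\chi_ru_{r+n}=-U_r$, $v_r-\chi_rv_{r+n}=-V_r$, and $(\tau^n-1)u_r=\sum_{j=0}^{k-1}\psi_r^{jn}U_{r+jn}$, $(\tau^n-1)v_r=\sum_{j=0}^{k-1}\psi_r^{jn}V_{r+jn}$.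
   Context: Setting: $l,m$ positive integers, $n=l+m$, $k=\operatorname{lcm}(l,m)$, weights $\alpha_1,\dots,\alpha_l,\beta_1,\dots,\beta_m\ge0$ not all zero with $\sum\alpha_i=\sum\beta_j$, and $\rho_1,\dots,\rho_k>1$. Indexing conventions: for an integer $r$, $\alpha_r:=\alpha_i$ with $1\le i\le l$, $r\equiv i\pmod l$; $\beta_r:=\beta_j$ with $1\le j\le m$, $r\equiv j\pmod m$; $\rho_r:=\rho_h$ with $1\le h\le k$, $r\equiv h\pmod k$; $u_r,v_r$ are extended $k$-periodically in $r$. Set $\sigma_0=1$, $\sigma_r=\rho_1\cdots\rho_r$ ($1\le r\le k$), $\tau=\rho_1\cdots\rho_k$, and $\sigma_{sk+h}=\tau^s\sigma_h$ for $s\in\mathbb Z$, $0\le h<k$. For integers $r$ and $s\ge0$ let $\psi_r^s=\rho_{r+1}\rho_{r+2}\cdots\rho_{r+s}$ (with $\psi_r^0=1$). Points: ${\bf a}_r^t=\tau^t\sigma_r(1,u_r)$, ${\bf b}_r^t=\tau^t\sigma_r(1,v_r)$ for $r,t\in\mathbb Z$; segments $\mathcal A_r^t=[{\bf a}_r^t,{\bf b}_{r+l}^t]$, $\mathcal B_r^t=[{\bf b}_r^t,{\bf a}_{r+m}^t]$ for $0\le r<k$, $t\in\mathbb Z$. *)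

From HB Require Import structures.
From mathcomp Require Import all_boot all_order all_algebra.
Set Implicit Arguments. Unset Strict Implicit. Unset Printing Implicit Defensive.
Import Order.TTheory GRing.Theory Num.Theory.
Local Open Scope ring_scope.

(* Conventions: finite families alpha_1..alpha_l, beta_1..beta_m, rho_1..rho_k
   are given as functions nat -> R; only the values at indices 1..l (resp.
   1..m, 1..k) matter.  Integer indices are reduced periodically. *)

(* the unique i with 1 <= i <= p and r = i (mod p) (for p > 0) *)
Definition per_idx (p : nat) (r : int) : nat := (absz ((r - 1) %% p)%Z).+1.

Definition pext {R : Type} (p : nat) (x : nat -> R) (r : int) : R :=
  x (per_idx p r).

Definition tau {R : pzRingType} (k : nat) (rho : nat -> R) : R :=
  \prod_(1 <= h < k.+1) rho h.

Definition sigma {R : unitRingType} (k : nat) (rho : nat -> R) (r : int) : R :=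
  (tau k rho) ^ (r %/ k)%Z * \prod_(1 <= h < (absz (r %% k)%Z).+1) rho h.

Definition psi {R : pzRingType} (k : nat) (rho : nat -> R) (r : int) (s : nat) : R :=
  \prod_(i < s) pext k rho (r + (i.+1)%:Z).

(* points a_r^t = tau^t sigma_r (1, u_r), b_r^t = tau^t sigma_r (1, v_r) *)
Definition pt {R : unitRingType} (k : nat) (rho : nat -> R) (w : int -> R)
  (r t : int) : R * R :=
  ((tau k rho) ^ t * sigma k rho r, (tau k rho) ^ t * sigma k rho r * w r).

Definition slope {R : fieldType} (P Q : R * R) : R := (Q.2 - P.2) / (Q.1 - P.1).

From HB Require Import structures.
From mathcomp Require Import all_boot all_order all_algebra.
From mathcomp Require Import zify ring lra.
Set Implicit Arguments. Unset Strict Implicit. Unset Printing Implicit Defensive.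
Import Order.TTheory GRing.Theory Num.Theory.
Local Open Scope ring_scope.

(* Since sigma_{r+s} = sigma_r psi_r^s,
   the slope condition on A_r^t (resp. B_r^t) is, after dividing by sigma_r,
     u_r = psi_r^l v_{r+l} - alpha_{r+1} (psi_r^l - 1),
     v_r = psi_r^m u_{r+m} + beta_{r+1} (psi_r^m - 1);
   by periodicity both hold for every r >= 0.  Substituting one into the other
   gives the first-order recurrences  u_r = psi_r^n u_{r+n} - U_r  and
   v_r = psi_r^n v_{r+n} - V_r  (n = l + m).  Iterating them k times and using
   k-periodicity of u, v together with psi_r^{kn} = tau^n > 1 yields
   (tau^n - 1) u_r = sum_{j<k} psi_r^{jn} U_{r+jn}, and the same for v;
   expanding U, V with psi_r^{jn} psi_{r+jn}^s = psi_r^{jn+s} gives the explicit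
   sums.  The argument works for any common multiple k of l and m. *)

Lemma psiD (R : pzRingType) k (rho : nat -> R) r a b :
  psi k rho r (a + b) = psi k rho r a * psi k rho (r + a%:Z) b.
Proof.
rewrite /psi big_split_ord /=; congr (_ * _); apply: eq_bigr => i _ /=.
by congr pext; lia.
Qed.

Lemma psi0 (R : pzRingType) k (rho : nat -> R) r : psi k rho r 0 = 1.
Proof. by rewrite /psi big_ord0. Qed.

Lemma pextMD (T : Type) p (x : nat -> T) r c :
  pext p x (r + (c * p)%N%:Z) = pext p x r.
Proof.
rewrite /pext /per_idx.
have -> : r + (c * p)%N%:Z - 1 = c%:Z * p%:Z + (r - 1) by rewrite PoszM; ring.
by rewrite modzMDl.
Qed.

Lemma pext_dvd (T : Type) p k (x : nat -> T) r :
  (p %| k)%N -> pext p x (r + k%:Z) = pext p x r.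
Proof. by move=> pk; rewrite -(divnK pk) pextMD. Qed.

Lemma psi_shiftk (R : pzRingType) k (rho : nat -> R) r s :
  psi k rho (r + k%:Z) s = psi k rho r s.
Proof.
apply: eq_bigr => i _.
by rewrite -addrA (addrC _ (Posz i.+1)) addrA (@pext_dvd _ k k) ?dvdnn.
Qed.

Lemma sigmaS (R : fieldType) (k : nat) (rho : nat -> R) (r : int) :
  (0 < k)%N -> tau k rho != 0 ->
  sigma k rho (r + 1) = sigma k rho r * pext k rho (r + 1).
Proof.
move=> k0 t0; have kz : k%:Z != 0 by lia.
rewrite /sigma /pext /per_idx addrK.
set q := (r %/ k)%Z; set a := (r %% k)%Z.
have a0 : 0 <= a by apply: modz_ge0.
have ak : a < k%:Z by apply: ltz_pmod; rewrite ltz_nat.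
have er : r = q * k%:Z + a by rewrite /q /a -divz_eq.
case: (ltP (a + 1) k%:Z) => ha.
- have -> : ((r + 1) %/ k)%Z = q.
    rewrite er -addrA divzMDl // divz_small ?addr0 //.
    by apply/andP; split; [lia | rewrite /absz; lia].
  have -> : ((r + 1) %% k)%Z = a + 1 by rewrite er -addrA modzMDl modz_small //; lia.
  have -> : absz (a + 1) = (absz a).+1 by lia.
  by rewrite -mulrA big_nat_recr.
- have ea : a = k%:Z - 1 by lia.
  have -> : ((r + 1) %/ k)%Z = q + 1.
    by rewrite er -addrA ea subrK -{2}(mul1r k%:Z) -mulrDl mulzK.
  have -> : ((r + 1) %% k)%Z = 0.
    by rewrite er -addrA ea subrK -{2}(mul1r k%:Z) -mulrDl modzMl.
  rewrite expfzDr // expr1z big_geq // mulr1 -mulrA; congr (_ * _).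
  have -> : absz a = k.-1 by lia.
  by rewrite /tau (big_nat_recr k) /= ?prednK //; lia.
Qed.

Lemma sigma_shift (R : fieldType) (k : nat) (rho : nat -> R) (r : int) s :
  (0 < k)%N -> tau k rho != 0 ->
  sigma k rho (r + s%:Z) = sigma k rho r * psi k rho r s.
Proof.
move=> k0 t0; elim: s => [|s IH]; first by rewrite addr0 psi0 mulr1.
have -> : r + s.+1%:Z = (r + s%:Z) + 1 by lia.
by rewrite -addn1 psiD sigmaS // IH -mulrA /psi big_ord1.
Qed.

Section Positivity.
Variables (R : realFieldType) (k : nat) (rho : nat -> R).
Hypothesis k_gt0 : (0 < k)%N.
Hypothesis rho_gt1 : forall h, (1 <= h <= k)%N -> 1 < rho h.

Lemma pext_gt1 x : 1 < pext k rho x.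
Proof.
apply: rho_gt1; rewrite /per_idx /=.
have : ((x - 1) %% k)%Z < k%:Z by apply: ltz_pmod; rewrite ltz_nat.
have : 0 <= ((x - 1) %% k)%Z by apply: modz_ge0; lia.
lia.
Qed.

Lemma psi_ge1 r s : 1 <= psi k rho r s.
Proof.
rewrite /psi; elim: s => [|s IH]; first by rewrite big_ord0.
by rewrite big_ord_recr /=; have := pext_gt1 (r + s.+1%:Z); nra.
Qed.

Lemma psi_gt1 r s : (0 < s)%N -> 1 < psi k rho r s.
Proof.
case: s => // s _; rewrite /psi big_ord_recr /=.
by have := pext_gt1 (r + s.+1%:Z); have := psi_ge1 r s; rewrite /psi; nra.
Qed.

Lemma tau_gt0 : 0 < tau k rho.
Proof.
rewrite /tau big_nat; apply: prodr_gt0 => h /andP[h1 h2].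
by have := rho_gt1 (h := h) ltac:(lia); lra.
Qed.

Lemma tau_neq0 : tau k rho != 0.
Proof. by rewrite gt_eqF // tau_gt0. Qed.

Lemma sigma_neq0 r : sigma k rho r != 0.
Proof.
rewrite /sigma mulf_neq0 //; first exact: expfz_neq0 tau_neq0.
have ak : ((r) %% k)%Z < k%:Z by apply: ltz_pmod; rewrite ltz_nat.
have a0 : 0 <= ((r) %% k)%Z by apply: modz_ge0; lia.
rewrite gt_eqF // big_nat; apply: prodr_gt0 => h /andP[h1 h2].
by have := rho_gt1 (h := h) ltac:(lia); lra.
Qed.

Lemma psi_period r : psi k rho r k = tau k rho.
Proof.
have kz : k%:Z != 0 by lia.
apply/(mulfI (sigma_neq0 r)); rewrite -sigma_shift ?tau_neq0 // mulrC.
have -> : r + k%:Z = 1 * k%:Z + r by ring.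
by rewrite /sigma divzMDl // modzMDl expfzDr ?tau_neq0 // expr1z mulrA.
Qed.

Lemma psi_periodX r c : psi k rho r (k * c) = tau k rho ^+ c.
Proof.
elim: c => [|c IH]; first by rewrite muln0 psi0 expr0.
by rewrite mulnS psiD psi_shiftk IH psi_period exprS.
Qed.

End Positivity.

Lemma slope_scaled (F : fieldType) (s p w0 w1 c : F) :
  s != 0 -> p != 1 -> slope (s, s * w0) (s * p, s * p * w1) = c ->
  w0 = p * w1 - c * (p - 1).
Proof.
move=> s0 p1; rewrite /slope /= => <-.
have d0 : s * p - s != 0 by rewrite -{2}(mulr1 s) -mulrBr mulf_neq0 ?subr_eq0.
by field.
Qed.

Lemma nonneg_by_period (P : int -> Prop) (k : nat) :
  (0 < k)%N -> (forall x, P x -> P (x + k%:Z)) ->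
  (forall x, 0 <= x < k%:Z -> P x) -> forall x, 0 <= x -> P x.
Proof.
move=> k0 Pk Pbase [N|N] // _; rewrite (divn_eq N k).
elim: (N %/ k)%N => [|q IH].
  by rewrite mul0n add0n; apply: Pbase; have := ltn_pmod N k0; lia.
have -> : Posz (q.+1 * k + N %% k)%N = Posz (q * k + N %% k)%N + k%:Z by lia.
exact: Pk.
Qed.

Lemma iterate_recurrence (R : comPzRingType) k (rho : nat -> R)
    (f g : int -> R) (n K : nat) (x : int) :
  0 <= x -> (forall y, 0 <= y -> f y = psi k rho y n * f (y + n%:Z) - g y) ->
  f x = psi k rho x (K * n) * f (x + (K * n)%N%:Z)
        - \sum_(j < K) psi k rho x (j * n) * g (x + (j * n)%N%:Z).
Proof.
move=> x0 rec; elim: K => [|K IH].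
  by rewrite big_ord0 mul0n addr0 psi0 mul1r subr0.
rewrite big_ord_recr /= {1}IH (rec (x + (K * n)%N%:Z)); last by lia.
have -> : x + (K * n)%N%:Z + n%:Z = x + (K.+1 * n)%N%:Z.
  by rewrite mulSnr (PoszD (K * n)) addrA.
by rewrite [in psi k rho x (K.+1 * _)]mulSnr psiD; ring.
Qed.

Lemma periodic_solution (R : realFieldType) k (rho : nat -> R)
    (f g : int -> R) (n : nat) (x : int) :
  (0 < k)%N -> (forall h, (1 <= h <= k)%N -> 1 < rho h) ->
  (forall y, f (y + k%:Z) = f y) -> 0 <= x ->
  (forall y, 0 <= y -> f y = psi k rho y n * f (y + n%:Z) - g y) ->
  (tau k rho ^+ n - 1) * f x
    = \sum_(j < k) psi k rho x (j * n) * g (x + (j * n)%N%:Z).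
Proof.
move=> k0 hr fk x0 rec.
have fP c y : f (y + (c * k)%N%:Z) = f y.
  elim: c => [|c IH]; first by rewrite mul0n addr0.
  by rewrite mulSn PoszD addrA addrAC fk IH.
have := @iterate_recurrence _ k rho f g n k x x0 rec.
rewrite (psi_periodX k0 hr) mulnC fP => E.
by rewrite mulrBl mul1r {2}E; ring.
Qed.

Section Construction.
Variables (R : realFieldType) (l m k : nat) (alpha beta rho : nat -> R).
Variables (u v : int -> R).
Hypotheses (l_gt0 : (0 < l)%N) (m_gt0 : (0 < m)%N).
Hypotheses (l_dvd_k : (l %| k)%N) (m_dvd_k : (m %| k)%N) (k_gt0 : (0 < k)%N).
Hypothesis rho_gt1 : forall h, (1 <= h <= k)%N -> 1 < rho h.
Hypothesis u_per : forall r : int, u (r + k%:Z) = u r.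
Hypothesis v_per : forall r : int, v (r + k%:Z) = v r.
Hypothesis slopeA : forall (r t : int), 0 <= r < k%:Z ->
  slope (pt k rho u r t) (pt k rho v (r + l%:Z) t) = pext l alpha (r + 1).
Hypothesis slopeB : forall (r t : int), 0 <= r < k%:Z ->
  slope (pt k rho v r t) (pt k rho u (r + m%:Z) t) = - pext m beta (r + 1).

Local Notation ps := (psi k rho).
Local Notation al := (pext l alpha).
Local Notation be := (pext m beta).

Definition Uterm (r : int) : R :=
  al (r + 1) * (ps r l - 1) - be (r + l%:Z + 1) * (ps r (l + m) - ps r l).
Definition Vterm (r : int) : R :=
  - be (r + 1) * (ps r m - 1) + al (r + m%:Z + 1) * (ps r (l + m) - ps r m).

Lemma relA_base x : 0 <= x < k%:Z ->
  u x = ps x l * v (x + l%:Z) - al (x + 1) * (ps x l - 1).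
Proof.
move=> hx; have pl1 : ps x l != 1 by rewrite gt_eqF // psi_gt1.
have slA := slopeA 0 hx.
rewrite /pt expr0z !mul1r sigma_shift ?tau_neq0 // in slA.
exact: slope_scaled (sigma_neq0 k_gt0 rho_gt1 x) pl1 slA.
Qed.

Lemma relB_base x : 0 <= x < k%:Z ->
  v x = ps x m * u (x + m%:Z) + be (x + 1) * (ps x m - 1).
Proof.
move=> hx; have pm1 : ps x m != 1 by rewrite gt_eqF // psi_gt1.
have slB := slopeB 0 hx.
rewrite /pt expr0z !mul1r sigma_shift ?tau_neq0 // in slB.
by rewrite (slope_scaled (sigma_neq0 k_gt0 rho_gt1 x) pm1 slB) mulNr opprK.
Qed.

Lemma relA x : 0 <= x ->
  u x = ps x l * v (x + l%:Z) - al (x + 1) * (ps x l - 1).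
Proof.
move: x; apply: (nonneg_by_period k_gt0 _ relA_base) => y /= Py.
rewrite (addrAC y k%:Z) (addrAC y k%:Z 1) u_per v_per psi_shiftk.
by rewrite pext_dvd.
Qed.

Lemma relB x : 0 <= x ->
  v x = ps x m * u (x + m%:Z) + be (x + 1) * (ps x m - 1).
Proof.
move: x; apply: (nonneg_by_period k_gt0 _ relB_base) => y /= Py.
rewrite (addrAC y k%:Z) (addrAC y k%:Z 1) u_per v_per psi_shiftk.
by rewrite pext_dvd.
Qed.

Lemma recurrence_u x : 0 <= x -> u x = ps x (l + m) * u (x + (l + m)%N%:Z) - Uterm x.
Proof.
move=> hx; rewrite /Uterm (relA hx) (relB (x := x + l%:Z)); last by lia.
by rewrite PoszD addrA psiD; ring.
Qed.

Lemma recurrence_v x : 0 <= x -> v x = ps x (l + m) * v (x + (l + m)%N%:Z) - Vterm x.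
Proof.
move=> hx; rewrite /Vterm (relB hx) (relA (x := x + m%:Z)); last by lia.
by rewrite PoszD addrA addrAC (addnC l m) psiD; ring.
Qed.

Lemma tauXn_sub1_neq0 : tau k rho ^+ (l + m) - 1 != 0.
Proof.
rewrite -(psi_periodX k_gt0 rho_gt1 0) subr_eq0 gt_eqF // psi_gt1 //.
by rewrite muln_gt0 k_gt0 addn_gt0 l_gt0.
Qed.

Lemma closed_u x : 0 <= x -> (tau k rho ^+ (l + m) - 1) * u x
  = \sum_(j < k) ps x (j * (l + m)) * Uterm (x + (j * (l + m))%N%:Z).
Proof. by move=> hx; apply: periodic_solution => // y; apply: recurrence_u. Qed.

Lemma closed_v x : 0 <= x -> (tau k rho ^+ (l + m) - 1) * v x
  = \sum_(j < k) ps x (j * (l + m)) * Vterm (x + (j * (l + m))%N%:Z).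
Proof. by move=> hx; apply: periodic_solution => // y; apply: recurrence_v. Qed.

Lemma u_explicit r : 0 <= r ->
  u r = (tau k rho ^+ (l + m) - 1)^-1 * \sum_(j < k)
     (al (r + 1 + (j * (l + m))%N%:Z)
        * (ps r (j * (l + m) + l)%N - ps r (j * (l + m))%N)
      - be (r + 1 + l%:Z + (j * (l + m))%N%:Z)
        * (ps r (j.+1 * (l + m))%N - ps r (j * (l + m) + l)%N)).
Proof.
move=> hr; rewrite -[u r](mulKf tauXn_sub1_neq0) closed_u //.
congr (_ * _); apply: eq_bigr => j _; set J := (j * (l + m))%N.
rewrite /Uterm (psiD _ _ _ J l) mulSnr (psiD _ _ _ J (l + m)).
have -> : r + 1 + J%:Z = r + J%:Z + 1 by ring.
have -> : r + 1 + l%:Z + J%:Z = r + J%:Z + l%:Z + 1 by ring.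
by ring.
Qed.

Lemma v_explicit r : 0 <= r ->
  v r = (tau k rho ^+ (l + m) - 1)^-1 * \sum_(j < k)
     (al (r + 1 + m%:Z + (j * (l + m))%N%:Z)
        * (ps r (j.+1 * (l + m))%N - ps r (j * (l + m) + m)%N)
      - be (r + 1 + (j * (l + m))%N%:Z)
        * (ps r (j * (l + m) + m)%N - ps r (j * (l + m))%N)).
Proof.
move=> hr; rewrite -[v r](mulKf tauXn_sub1_neq0) closed_v //.
congr (_ * _); apply: eq_bigr => j _; set J := (j * (l + m))%N.
rewrite /Vterm (psiD _ _ _ J m) mulSnr (psiD _ _ _ J (l + m)).
have -> : r + 1 + J%:Z = r + J%:Z + 1 by ring.
have -> : r + 1 + m%:Z + J%:Z = r + J%:Z + m%:Z + 1 by ring.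
by ring.
Qed.

End Construction.

Theorem mainTheorem2 (R : realFieldType) (l m : nat)
  (alpha beta rho : nat -> R) (u v : int -> R) :
  (0 < l)%N -> (0 < m)%N -> coprime l m ->
  (forall i, (1 <= i <= l)%N -> 0 <= alpha i) ->
  (forall j, (1 <= j <= m)%N -> 0 <= beta j) ->
  ((exists2 i, (1 <= i <= l)%N & alpha i != 0) \/
   (exists2 j, (1 <= j <= m)%N & beta j != 0)) ->
  \sum_(1 <= i < l.+1) alpha i = \sum_(1 <= j < m.+1) beta j ->
  (forall h, (1 <= h <= lcmn l m)%N -> 1 < rho h) ->
  (* u, v extended k-periodically *)
  (forall r : int, u (r + (lcmn l m)%:Z) = u r) ->
  (forall r : int, v (r + (lcmn l m)%:Z) = v r) ->
  (* the construction: A_r^t has slope alpha_{r+1}, B_r^t has slope -beta_{r+1} *)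
  (forall (r t : int), 0 <= r < (lcmn l m)%:Z ->
     slope (pt (lcmn l m) rho u r t) (pt (lcmn l m) rho v (r + l%:Z) t)
       = pext l alpha (r + 1)) ->
  (forall (r t : int), 0 <= r < (lcmn l m)%:Z ->
     slope (pt (lcmn l m) rho v r t) (pt (lcmn l m) rho u (r + m%:Z) t)
       = - pext m beta (r + 1)) ->
  let k := lcmn l m in
  let n := (l + m)%N in
  let tn := tau k rho ^+ n in
  let ps := psi k rho in
  let al := pext l alpha in
  let be := pext m beta in
  let U := fun r : int => al (r + 1) * (ps r l - 1)
                          - be (r + l%:Z + 1) * (ps r n - ps r l) in
  let V := fun r : int => - be (r + 1) * (ps r m - 1)
                          + al (r + m%:Z + 1) * (ps r n - ps r m) in
  forall r : int, 0 <= r < k%:Z ->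
  (u r = (tn - 1)^-1 * \sum_(j < k)
          (al (r + 1 + (j * n)%N%:Z) * (ps r (j * n + l)%N - ps r (j * n)%N)
           - be (r + 1 + l%:Z + (j * n)%N%:Z) * (ps r (j.+1 * n)%N - ps r (j * n + l)%N))) /\
      (      v r = (tn - 1)^-1 * \sum_(j < k)
          (al (r + 1 + m%:Z + (j * n)%N%:Z) * (ps r (j.+1 * n)%N - ps r (j * n + m)%N)
           - be (r + 1 + (j * n)%N%:Z) * (ps r (j * n + m)%N - ps r (j * n)%N))) /\
      u r - ps r n * u (r + n%:Z) = - U r /\
      v r - ps r n * v (r + n%:Z) = - V r /\
      (tn - 1) * u r = \sum_(j < k) ps r (j * n)%N * U (r + (j * n)%N%:Z) /\
      (tn - 1) * v r = \sum_(j < k) ps r (j * n)%N * V (r + (j * n)%N%:Z).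
Proof.
move=> l0 m0 _ _ _ _ _ hr hu hv HA HB k n tn ps al be U V r /andP[r0 _].
have k0 : (0 < k)%N by rewrite lcmn_gt0 l0.
have lk : (l %| k)%N := dvdn_lcml l m.
have mk : (m %| k)%N := dvdn_lcmr l m.
have recu := recurrence_u l0 m0 lk mk k0 hr hu hv HA HB.
have recv := recurrence_v l0 m0 lk mk k0 hr hu hv HA HB.
split; first exact: (u_explicit l0 m0 lk mk k0 hr hu hv HA HB r0).
split; first exact: (v_explicit l0 m0 lk mk k0 hr hu hv HA HB r0).
split; first by rewrite {1}(recu r r0) addrAC subrr add0r.
split; first by rewrite {1}(recv r r0) addrAC subrr add0r.
split; first exact: (closed_u l0 m0 lk mk k0 hr hu hv HA HB r0).
exact: (closed_v l0 m0 lk mk k0 hr hu hv HA HB r0).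
Qed.
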